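(* Consider the equatorial trapped waves propagating eastward over a constant underlying current $c_0$, given in Lagrangian labels $(q,r,s)$ (with $q\in\mathbb{R}$, $r\le r_0<0$, $r-f(s)\le r_0$) by \[ x=q-c_0t-\tfrac1k e^{k[r-f(s)]}\sin[k(q-ct)],\qquad y=s,\qquad z=r+\tfrac1k e^{k[r-f(s)]}\cos[k(q-ct)], \] where $f(s)=\frac{c\beta}{2\gamma}s^2$, $\gamma=2\Omega c_0+g>0$, and the wave speed satisfies the dispersion relation $c=\frac{\sqrt{\Omega^2+k(2\Omega c_0+g)}-\Omega}{k}$ with $c_0\neq c$. If the wave steepness at the equator satisfies \[ e^{kr_0}>\frac{3\Omega+\sqrt{\Omega^2+k(2\Omega c_0+g)}}{\Omega+3\sqrt{\Omega^2+k(2\Omega c_0+g)}} \] (the right-hand side being greater than $1/3$, and close to $1/3$ since $\Omega$ is small), then this flow is unstable to short-wavelength perturbations, i.e. there is a fluid particle trajectory with initial position $\mathbf{X}_0$ for which the exponent $\Lambda(\mathbf{X}_0)$ defined below is strictly positive.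
   Context: Setting: $\beta$-plane approximation of geophysical flow near the equator, with $x$ pointing east, $y$ north, $z$ vertically up, constant density $\rho$, velocity $\mathbf{U}=(u,v,w)$, pressure $P$, Earth rotation speed $\Omega>0$, gravity $g>0$, $\beta=2\Omega/R$ ($R$ the Earth radius), wavenumber $k>0$, wave speed $c>0$, current strength $c_0$ (with $2\Omega c_0+g>0$). The governing equations are $u_t+uu_x+vu_y+wu_z+2\Omega w-\beta y v=-P_x/\rho$, $v_t+uv_x+vv_y+wv_z+\beta y u=-P_y/\rho$, $w_t+uw_x+vw_y+ww_z-2\Omega u=-P_z/\rho-g$, $\nabla\cdot\mathbf U=0$, with free-surface kinematic and constant-pressure boundary conditions and $(u,v)\to(-c_0,0)$ at great depth; the flow above (with $v\equiv0$) solves these with an appropriate pressure. The wave steepness at latitude $s$ is $e^{k(r-f(s))}$, maximal value $e^{kr_0}$ at the equator. Short-wavelength instability: for a perturbation $\varepsilon\,\mathbf b\,e^{i\Phi/\delta}$ with $\Phi(\mathbf X,0)=\mathbf X\cdot\xi_0$, $\mathbf b(\cdot,0)=\mathbf b_0$, $\xi_0\cdot\mathbf b_0=0$, the position $\mathbf X=(x,y,z)$, wave vector $\xi=\nabla\Phi$ and amplitude $\mathbf b$ evolve by $\dot{\mathbf X}=\mathbf U(\mathbf X,t)$, $\dot\xi=-(\nabla\mathbf U)^T\xi$, $\dot{\mathbf b}=-L\mathbf b-(\nabla\mathbf U)\mathbf b+\big([L\mathbf b+2(\nabla\mathbf U)\mathbf b]\cdot\xi\big)\xi/|\xi|^2$,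 with $\mathbf X(0)=\mathbf X_0$, $\xi(0)=\xi_0$, $\mathbf b(0)=\mathbf b_0$, where $\nabla\mathbf U$ is the matrix with rows $(u_x,v_x,w_x)$, $(u_y,v_y,w_y)$, $(u_z,v_z,w_z)$ and $L=\begin{pmatrix}0&-\beta y&2\Omega\\ \beta y&0&0\\ -2\Omega&0&0\end{pmatrix}$. The instability exponent is $\Lambda(\mathbf X_0)=\limsup_{t\to\infty}\frac1t\ln\Big(\sup_{|\xi_0|=|\mathbf b_0|=1,\ \xi_0\cdot\mathbf b_0=0}|\mathbf b(t)|\Big)$, and the flow is called unstable (to short-wavelength perturbations) if $\Lambda(\mathbf X_0)>0$ for some trajectory. *)

From Stdlib Require Import Reals ClassicalEpsilon.
From Coquelicot Require Import Coquelicot.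
Open Scope R_scope.

Definition V3 : Type := (R * R * R)%type.
Definition v1 (a : V3) : R := fst (fst a).
Definition v2 (a : V3) : R := snd (fst a).
Definition v3 (a : V3) : R := snd a.
Definition mk3 (a b c : R) : V3 := (a, b, c).
Definition dot3 (a b : V3) : R := v1 a * v1 b + v2 a * v2 b + v3 a * v3 b.
Definition norm3 (a : V3) : R := sqrt (dot3 a a).
Definition add3 (a b : V3) : V3 := mk3 (v1 a + v1 b) (v2 a + v2 b) (v3 a + v3 b).
Definition scal3 (l : R) (a : V3) : V3 := mk3 (l * v1 a) (l * v2 a) (l * v3 a).
Definition opp3 (a : V3) : V3 := scal3 (-1) a.
Definition comp3 (i : nat) (a : V3) : R :=
  match i with 0%nat => v1 a | 1%nat => v2 a | _ => v3 a end.
Definition e3 (j : nat) : V3 :=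
  match j with 0%nat => mk3 1 0 0 | 1%nat => mk3 0 1 0 | _ => mk3 0 0 1 end.

Definition M3 : Type := nat -> nat -> R.
Definition mulMV (M : M3) (a : V3) : V3 :=
  mk3 (M 0%nat 0%nat * v1 a + M 0%nat 1%nat * v2 a + M 0%nat 2%nat * v3 a)
      (M 1%nat 0%nat * v1 a + M 1%nat 1%nat * v2 a + M 1%nat 2%nat * v3 a)
      (M 2%nat 0%nat * v1 a + M 2%nat 1%nat * v2 a + M 2%nat 2%nat * v3 a).
Definition transp (M : M3) : M3 := fun i j => M j i.

(* Physical parameters: Om = Omega, g, Re = Earth radius, k, c0. *)
Definition beta (Om Re : R) : R := 2 * Om / Re.
Definition gamma (Om g c0 : R) : R := 2 * Om * c0 + g.
Definition wave_speed (Om g k c0 : R) : R :=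
  (sqrt (Om ^ 2 + k * (2 * Om * c0 + g)) - Om) / k.
Definition fshape (Om g Re k c0 : R) (s : R) : R :=
  wave_speed Om g k c0 * beta Om Re / (2 * gamma Om g c0) * s ^ 2.

Definition label_ok (Om g Re k c0 r0 : R) (L : V3) : Prop :=
  v2 L <= r0 /\ v2 L - fshape Om g Re k c0 (v3 L) <= r0.

Definition lagr (Om g Re k c0 : R) (L : V3) (t : R) : V3 :=
  let q := v1 L in let r := v2 L in let s := v3 L in
  let c := wave_speed Om g k c0 in
  let ee := exp (k * (r - fshape Om g Re k c0 s)) in
  mk3 (q - c0 * t - / k * ee * sin (k * (q - c * t)))
      s
      (r + / k * ee * cos (k * (q - c * t))).

Definition lagr_vel (Om g Re k c0 : R) (L : V3) (t : R) : V3 :=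
  mk3 (Derive (fun tau => v1 (lagr Om g Re k c0 L tau)) t)
      (Derive (fun tau => v2 (lagr Om g Re k c0 L tau)) t)
      (Derive (fun tau => v3 (lagr Om g Re k c0 L tau)) t).

Definition in_fluid (Om g Re k c0 r0 : R) (t : R) (X : V3) : Prop :=
  exists L, label_ok Om g Re k c0 r0 L /\ lagr Om g Re k c0 L t = X.

Lemma V3_inhabited : inhabited V3.
Proof. exact (inhabits (mk3 0 0 0)). Qed.

(* Eulerian velocity field U(X, t): velocity of the particle at X at time t
   (the Lagrangian map is one-to-one, so the label is unique; outside the
   fluid domain the value is irrelevant). *)
Definition U (Om g Re k c0 r0 : R) (X : V3) (t : R) : V3 :=
  lagr_vel Om g Re k c0
    (epsilon V3_inhabited
       (fun L => label_ok Om g Re k c0 r0 L /\ lagr Om g Re k c0 L t = X)) t.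

Definition gradU (Om g Re k c0 r0 : R) (X : V3) (t : R) : M3 :=
  fun i j => Derive (fun h => comp3 i (U Om g Re k c0 r0 (add3 X (scal3 h (e3 j))) t)) 0.

Definition Lmat (Om Re y : R) : M3 :=
  fun i j =>
    match i, j with
    | 0%nat, 1%nat => - (beta Om Re * y)
    | 0%nat, 2%nat => 2 * Om
    | 1%nat, 0%nat => beta Om Re * y
    | 2%nat, 0%nat => - (2 * Om)
    | _, _ => 0
    end.

Definition has_deriv3 (F : R -> V3) (t : R) (v : V3) : Prop :=
  is_derive (fun tau => v1 (F tau)) t (v1 v) /\
  is_derive (fun tau => v2 (F tau)) t (v2 v) /\
  is_derive (fun tau => v3 (F tau)) t (v3 v).

Definition wkb_solution (Om g Re k c0 r0 : R) (X0 xi0 b0 : V3)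
    (X xi b : R -> V3) : Prop :=
  X 0 = X0 /\ xi 0 = xi0 /\ b 0 = b0 /\
  forall t, 0 <= t ->
    let G := gradU Om g Re k c0 r0 (X t) t in
    let Lm := Lmat Om Re (v2 (X t)) in
    has_deriv3 X t (U Om g Re k c0 r0 (X t) t) /\
    has_deriv3 xi t (opp3 (mulMV (transp G) (xi t))) /\
    has_deriv3 b t
      (add3 (opp3 (add3 (mulMV Lm (b t)) (mulMV G (b t))))
            (scal3 (dot3 (add3 (mulMV Lm (b t)) (scal3 2 (mulMV G (b t)))) (xi t)
                    / (norm3 (xi t)) ^ 2) (xi t))).

Definition sup_amp (Om g Re k c0 r0 : R) (X0 : V3) (t : R) : Rbar :=
  Rbar_lub (fun v => exists xi0 b0 X xi b,
    norm3 xi0 = 1 /\ norm3 b0 = 1 /\ dot3 xi0 b0 = 0 /\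
    wkb_solution Om g Re k c0 r0 X0 xi0 b0 X xi b /\
    v = Finite (norm3 (b t))).

(* (1/t) ln (sup ...), extended-real valued (ln 0 = -oo, ln (+oo) = +oo). *)
Definition growth_rate (Om g Re k c0 r0 : R) (X0 : V3) (t : R) : Rbar :=
  match sup_amp Om g Re k c0 r0 X0 t with
  | Finite v => match Rlt_dec 0 v with
                | left _ => Finite (ln v / t)
                | right _ => m_infty
                end
  | p_infty => p_infty
  | m_infty => m_infty
  end.

Definition limsup_infty (F : R -> Rbar) : Rbar :=
  Rbar_glb (fun w => exists T, w = Rbar_lub (fun v => exists t, T <= t /\ v = F t)).

Definition Lambda (Om g Re k c0 r0 : R) (X0 : V3) : Rbar :=
  limsup_infty (growth_rate Om g Re k c0 r0 X0).

From Stdlib Require Import Reals Lra Psatz ClassicalEpsilon FunctionalExtensionality.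
From Coquelicot Require Import Coquelicot.
Open Scope R_scope.

(* At the equator the flow is planar: the particle with label [(q, r, 0)] stays in the
   [(x, z)] plane.  Follow the particle with label [(0, rs, 0)], [rs < r0], with wave vector
   [xi = e_y]: the [y]-row of [grad U] vanishes, so [xi] stays constant and the amplitude
   equation becomes a linear system for [(b_x, b_z)].
   Its coefficients come from inverting the Lagrangian map near the path.  On [r <= r0] the
   map [(q, r) -> (x, z)] is a translation perturbed by a map of Lipschitz constant
   [e^{k r0} < 1]; hence it is injective and locally onto, and its inverse has an explicit
   linearization.  This yields [grad U = kappa * (reflection of angle k (q - c t)) + rotation]
   in the [(x, z)] plane.
   In the frame turning with half the wave phase the system is autonomous with eigenvalues
   [+- sqrt ((kappa - omega) (kappa + omega))], and the steepness hypothesis is exactly what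
   makes [kappa + omega > 0] for [e^{k rs}] close to [e^{k r0}].  So [|b (t)| = e^{mu t}] with
   [mu > 0], and [Lambda >= mu]. *)

Lemma exp_le_compat x y : x <= y -> exp x <= exp y.
Proof. intros [H| ->]; [left; apply exp_increasing|right]; auto. Qed.

Lemma exp_lt_1 x : x < 0 -> exp x < 1.
Proof. intro H. rewrite <- exp_0. now apply exp_increasing. Qed.

Lemma Rabs_le_of_sqr_le x y : x ^ 2 <= y ^ 2 -> 0 <= y -> Rabs x <= y.
Proof.
  intros H hy. rewrite <- (Rabs_right y) by lra.
  apply Rsqr_le_abs_0. now rewrite !Rsqr_pow2.
Qed.

Lemma sin_sqr_le x : sin x ^ 2 <= x ^ 2.
Proof.
  assert (Hpos : forall y, 0 <= y -> sin y ^ 2 <= y ^ 2).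
  { intros y Hy. destruct (Req_dec y 0) as [->|Hy0]; [rewrite sin_0; lra|].
    assert (sin y < y) by (apply sin_lt_x; lra).
    destruct (Rle_lt_dec y 1).
    - assert (0 <= sin y) by (apply sin_ge_0; pose proof PI2_1; lra). nra.
    - pose proof (SIN_bound y). nra. }
  destruct (Rle_lt_dec 0 x); [now apply Hpos|].
  replace (sin x ^ 2) with (sin (-x) ^ 2) by (rewrite sin_neg; ring).
  replace (x ^ 2) with ((-x) ^ 2) by ring. apply Hpos; lra.
Qed.

Lemma one_minus_cos_le d : 1 - cos d <= d ^ 2 / 2.
Proof.
  replace d with (2 * (d / 2)) at 1 by field. rewrite cos_2a_sin.
  pose proof (sin_sqr_le (d / 2)). simpl in *. nra.
Qed.

Lemma exp_diff_sqr_le k r0 r1 r2 : 0 < k -> r1 <= r0 -> r2 <= r0 ->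
  (exp (k * r1) - exp (k * r2)) ^ 2 <= exp (k * r0) ^ 2 * k ^ 2 * (r1 - r2) ^ 2.
Proof.
  intros hk.
  assert (Hle : forall a b, b <= a -> a <= r0 ->
    (exp (k * a) - exp (k * b)) ^ 2 <= exp (k * r0) ^ 2 * k ^ 2 * (a - b) ^ 2).
  { intros a b hab ha.
    (* e^{ka} - e^{kb} = e^{ka} (1 - e^{-k(a-b)}) <= e^{kr0} k (a - b) *)
    assert (E : exp (k * b) = exp (k * a) * exp (k * (b - a))).
    { rewrite <- exp_plus. f_equal; ring. }
    pose proof (exp_ineq1_le (k * (b - a))).
    assert (exp (k * (b - a)) <= 1) by (rewrite <- exp_0; apply exp_le_compat; nra).
    assert (exp (k * a) <= exp (k * r0)) by (apply exp_le_compat; nra).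
    pose proof (exp_pos (k * a)).
    assert (0 <= exp (k * a) - exp (k * b) <= exp (k * r0) * (k * (a - b))) by (rewrite E; nra).
    replace (exp (k * r0) ^ 2 * k ^ 2 * (a - b) ^ 2) with ((exp (k * r0) * (k * (a - b))) ^ 2)
      by ring.
    nra. }
  intros h1 h2. destruct (Rle_lt_dec r2 r1); [apply Hle; lra|].
  replace ((exp (k * r1) - exp (k * r2)) ^ 2) with ((exp (k * r2) - exp (k * r1)) ^ 2) by ring.
  replace ((r1 - r2) ^ 2) with ((r2 - r1) ^ 2) by ring. apply Hle; lra.
Qed.

Lemma polar_diff_sqr_le k r0 q1 r1 q2 r2 u1 u2 : 0 < k -> r1 <= r0 -> r2 <= r0 ->
  u1 - u2 = k * (q1 - q2) ->
  (exp (k * r1) * sin u1 - exp (k * r2) * sin u2) ^ 2 +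
  (exp (k * r1) * cos u1 - exp (k * r2) * cos u2) ^ 2
  <= exp (k * r0) ^ 2 * (k ^ 2 * ((q1 - q2) ^ 2 + (r1 - r2) ^ 2)).
Proof.
  intros hk h1 h2 hu.
  set (A1 := exp (k * r1)). set (A2 := exp (k * r2)).
  assert (Id : (A1 * sin u1 - A2 * sin u2) ^ 2 + (A1 * cos u1 - A2 * cos u2) ^ 2
     = (A1 - A2) ^ 2 + 2 * A1 * A2 * (1 - cos (u1 - u2))).
  { rewrite cos_minus. pose proof (sin2_cos2 u1). pose proof (sin2_cos2 u2).
    unfold Rsqr in *. nra. }
  rewrite Id.
  pose proof (exp_diff_sqr_le k r0 r1 r2 hk h1 h2) as Hr. fold A1 A2 in Hr.
  pose proof (one_minus_cos_le (u1 - u2)) as Hq. rewrite hu in Hq |- *.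
  assert (A1 <= exp (k * r0)) by (unfold A1; apply exp_le_compat; nra).
  assert (A2 <= exp (k * r0)) by (unfold A2; apply exp_le_compat; nra).
  assert (0 < A1) by apply exp_pos. assert (0 < A2) by apply exp_pos.
  assert (0 <= 1 - cos (k * (q1 - q2))) by (pose proof (COS_bound (k * (q1 - q2))); lra).
  assert (HA : A1 * A2 <= exp (k * r0) ^ 2) by nra.
  assert (0 <= (k * (q1 - q2)) ^ 2) by apply pow2_ge_0.
  assert (2 * (A1 * A2) * (1 - cos (k * (q1 - q2))) <= exp (k * r0) ^ 2 * (k * (q1 - q2)) ^ 2).
  { apply Rle_trans with (2 * (A1 * A2) * ((k * (q1 - q2)) ^ 2 / 2)).
    - apply Rmult_le_compat_l; nra.
    - nra. }
  nra.
Qed.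

Lemma polar_components_diff_sqr_le k r0 c t : 0 < k -> forall q1 r1 q2 r2, r1 <= r0 -> r2 <= r0 ->
  (exp (k * r1) * sin (k * (q1 - c * t)) - exp (k * r2) * sin (k * (q2 - c * t))) ^ 2
    <= (k * exp (k * r0)) ^ 2 * ((q1 - q2) ^ 2 + (r1 - r2) ^ 2) /\
  (exp (k * r1) * cos (k * (q1 - c * t)) - exp (k * r2) * cos (k * (q2 - c * t))) ^ 2
    <= (k * exp (k * r0)) ^ 2 * ((q1 - q2) ^ 2 + (r1 - r2) ^ 2).
Proof.
  intros hk q1 r1 q2 r2 h1 h2.
  pose proof (polar_diff_sqr_le k r0 q1 r1 q2 r2 (k * (q1 - c * t)) (k * (q2 - c * t))
                hk h1 h2 ltac:(ring)) as W.
  pose proof (pow2_ge_0 (exp (k * r1) * sin (k * (q1 - c * t))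
                         - exp (k * r2) * sin (k * (q2 - c * t)))).
  pose proof (pow2_ge_0 (exp (k * r1) * cos (k * (q1 - c * t))
                         - exp (k * r2) * cos (k * (q2 - c * t)))).
  split; nra.
Qed.

Lemma near_identity_norm_ge m dq dr Eq Ez : 0 <= m < 1 ->
  Eq ^ 2 + Ez ^ 2 <= m ^ 2 * (dq ^ 2 + dr ^ 2) ->
  (1 - m) ^ 2 * (dq ^ 2 + dr ^ 2) <= (dq + Eq) ^ 2 + (dr + Ez) ^ 2.
Proof.
  intros hm H.
  set (n := sqrt (dq ^ 2 + dr ^ 2)). set (e := sqrt (Eq ^ 2 + Ez ^ 2)).
  assert (hn : n ^ 2 = dq ^ 2 + dr ^ 2) by (apply pow2_sqrt; nra).
  assert (he : e ^ 2 = Eq ^ 2 + Ez ^ 2) by (apply pow2_sqrt; nra).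
  assert (0 <= n) by apply sqrt_pos. assert (0 <= e) by apply sqrt_pos.
  assert (hem : e <= m * n).
  { eapply Rle_trans; [apply Rle_abs|]. apply Rabs_le_of_sqr_le; [|nra].
    replace ((m * n) ^ 2) with (m ^ 2 * n ^ 2) by ring. rewrite he, hn. lra. }
  assert (cs : Rabs (dq * Eq + dr * Ez) <= n * e).
  { apply Rabs_le_of_sqr_le; [|nra].
    replace ((n * e) ^ 2) with (n ^ 2 * e ^ 2) by ring. rewrite hn, he.
    assert (0 <= (dq * Ez - dr * Eq) ^ 2) by apply pow2_ge_0. nra. }
  apply Rabs_le_between in cs.
  assert (0 <= (1 - m) * n <= n - e) by nra.
  nra.
Qed.

Lemma near_identity_second_coord_ge m dq dr Eq Ez : 0 <= m < 1 ->
  Eq ^ 2 + Ez ^ 2 <= m ^ 2 * (dq ^ 2 + dr ^ 2) -> 0 <= dr ->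
  (1 - m) * dr - Rabs (dq + Eq) / (1 - m) <= dr + Ez.
Proof.
  intros hm H hdr.
  set (d := dq + Eq). set (p := / (1 - m)).
  assert (hp : p * (1 - m) = 1) by (unfold p; field; lra).
  assert (p1 : 1 <= p) by (unfold p; rewrite <- Rinv_1; apply Rinv_le_contravar; lra).
  replace (Rabs d / (1 - m)) with (Rabs d * p) by (unfold p; field; lra).
  assert (ha : Rabs d ^ 2 = d ^ 2) by apply pow2_abs.
  assert (0 <= Rabs d) by apply Rabs_pos.
  assert (Hq : m ^ 2 * dq ^ 2 - Eq ^ 2 <= d ^ 2 * p ^ 2).
  { replace Eq with (d - dq) by (unfold d; ring).
    assert (hm2 : 0 < 1 - m ^ 2) by nra.
    assert (key : d ^ 2 * p ^ 2 + (d - dq) ^ 2 - m ^ 2 * dq ^ 2 =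
       (1 - m ^ 2) * (dq - d / (1 - m ^ 2)) ^ 2 + d ^ 2 * (p ^ 2 + 1 - 1 / (1 - m ^ 2))).
    { field. lra. }
    assert (1 / (1 - m ^ 2) <= p ^ 2).
    { replace (p ^ 2) with (1 / ((1 - m) ^ 2)) by (unfold p; field; lra).
      apply Rmult_le_compat_l; [lra|]. apply Rinv_le_contravar; nra. }
    assert (0 <= (1 - m ^ 2) * (dq - d / (1 - m ^ 2)) ^ 2)
      by (apply Rmult_le_pos; [lra|apply pow2_ge_0]).
    assert (0 <= d ^ 2 * (p ^ 2 + 1 - 1 / (1 - m ^ 2)))
      by (apply Rmult_le_pos; [apply pow2_ge_0|lra]).
    lra. }
  assert (Hz : Rabs Ez <= m * dr + Rabs d * p).
  { apply Rabs_le_of_sqr_le; [|nra].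
    assert (0 <= m * dr * (Rabs d * p)) by (apply Rmult_le_pos; apply Rmult_le_pos; lra).
    replace ((m * dr + Rabs d * p) ^ 2)
      with (m ^ 2 * dr ^ 2 + 2 * (m * dr * (Rabs d * p)) + Rabs d ^ 2 * p ^ 2) by ring.
    rewrite ha. lra. }
  apply Rabs_le_between in Hz. nra.
Qed.

Lemma near_identity_fiber_bound m dq dr Eq Ez : 0 <= m < 1 ->
  Eq ^ 2 + Ez ^ 2 <= m ^ 2 * (dq ^ 2 + dr ^ 2) -> dq + Eq = 0 ->
  (dr + Ez) ^ 2 <= 2 / (1 - m ^ 2) * dr ^ 2.
Proof.
  intros hm H hd. replace Eq with (- dq) in H by lra.
  assert (hm2 : 0 < 1 - m ^ 2) by nra.
  (* |dq| <= m |d| forces dq^2 <= m^2 dr^2 / (1 - m^2), hence Ez^2 <= m^2 dr^2 / (1 - m^2) *)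
  assert (dq ^ 2 <= m ^ 2 * dr ^ 2 / (1 - m ^ 2)).
  { apply (Rmult_le_reg_l (1 - m ^ 2)); auto.
    replace ((1 - m ^ 2) * (m ^ 2 * dr ^ 2 / (1 - m ^ 2))) with (m ^ 2 * dr ^ 2)
      by (field; lra).
    nra. }
  assert ((dr + Ez) ^ 2 <= 2 * dr ^ 2 + 2 * Ez ^ 2)
    by (assert (0 <= (dr - Ez) ^ 2) by apply pow2_ge_0; nra).
  assert (2 * dr ^ 2 + 2 * (m ^ 2 * (m ^ 2 * dr ^ 2 / (1 - m ^ 2) + dr ^ 2))
          = 2 / (1 - m ^ 2) * dr ^ 2) by (field; lra).
  assert (0 <= m ^ 2) by apply pow2_ge_0.
  nra.
Qed.

Lemma continuity_pt_of_sqr_lipschitz (f : R -> R) K : 0 <= K ->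
  (forall a b, (f a - f b) ^ 2 <= K * (a - b) ^ 2) -> forall x, continuity_pt f x.
Proof.
  intros hK H x eps heps. exists (eps / (K + 1)). split; [apply Rdiv_lt_0_compat; lra|].
  intros y [_ hy]. simpl in *. unfold R_dist in *.
  set (d := eps / (K + 1)) in *.
  assert (hd : d * (K + 1) = eps) by (unfold d; field; lra).
  assert (0 < d) by (unfold d; apply Rdiv_lt_0_compat; lra).
  assert ((y - x) ^ 2 < d ^ 2) by (rewrite <- pow2_abs; pose proof (Rabs_pos (y - x)); nra).
  pose proof (H y x).
  assert (Hf : Rabs (f y - f x) ^ 2 < eps ^ 2).
  { rewrite pow2_abs, <- hd. assert (K * d ^ 2 < (d * (K + 1)) ^ 2) by nra. nra. }
  pose proof (Rabs_pos (f y - f x)). nra.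
Qed.

Lemma Rmin_sqr_lipschitz a b r0 : (Rmin a r0 - Rmin b r0) ^ 2 <= (a - b) ^ 2.
Proof.
  unfold Rmin; destruct (Rle_dec a r0) as [h1|h1%Rnot_le_lt], (Rle_dec b r0) as [h2|h2%Rnot_le_lt].
  - lra.
  - assert (0 <= (b - r0) * (b + r0 - 2 * a)) by (apply Rmult_le_pos; lra). nra.
  - assert (0 <= (a - r0) * (a + r0 - 2 * b)) by (apply Rmult_le_pos; lra). nra.
  - replace ((r0 - r0) ^ 2) with 0 by ring. apply pow2_ge_0.
Qed.

Lemma MVT_between (f f' : R -> R) a b : (forall x, derivable_pt_lim f x (f' x)) ->
  exists z, ((a <= z <= b) \/ (b <= z <= a)) /\ f b - f a = f' z * (b - a).
Proof.
  intros H. destruct (Rtotal_order a b) as [h|[<-|h]].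
  - destruct (MVT_cor2 f f' a b h (fun z _ => H z)) as [z [E hz]].
    exists z. split; [left; lra|exact E].
  - exists a. split; [left; lra|ring].
  - destruct (MVT_cor2 f f' b a h (fun z _ => H z)) as [z [E hz]].
    exists z. split; [right; lra|lra].
Qed.

Lemma perturbed_linear_system_solution J11 J12 J21 J22 e11 e12 e21 e22 u v hx hz D kap :
  D = J11 * J22 - J12 * J21 -> 0 < D -> 0 <= kap ->
  Rabs J11 <= 2 -> Rabs J12 <= 2 -> Rabs J21 <= 2 -> Rabs J22 <= 2 ->
  e11 ^ 2 <= kap ^ 2 * (u ^ 2 + v ^ 2) -> e12 ^ 2 <= kap ^ 2 * (u ^ 2 + v ^ 2) ->
  e21 ^ 2 <= kap ^ 2 * (u ^ 2 + v ^ 2) -> e22 ^ 2 <= kap ^ 2 * (u ^ 2 + v ^ 2) ->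
  (J11 + e11) * u + (J12 + e12) * v = hx -> (J21 + e21) * u + (J22 + e22) * v = hz ->
  Rabs (u - (J22 * hx - J12 * hz) / D) <= 8 * kap * (u ^ 2 + v ^ 2) / D /\
  Rabs (v - (J11 * hz - J21 * hx) / D) <= 8 * kap * (u ^ 2 + v ^ 2) / D.
Proof.
  intros HD hD hkap a11 a12 a21 a22 b11 b12 b21 b22 E1 E2.
  set (N := u ^ 2 + v ^ 2) in *.
  assert (hN : 0 <= N) by (unfold N; nra).
  assert (Hres : forall e e', e ^ 2 <= kap ^ 2 * N -> e' ^ 2 <= kap ^ 2 * N ->
                 Rabs (e * u + e' * v) <= 2 * kap * N).
  { intros e e' he he'. apply Rabs_le_of_sqr_le; [|nra].
    assert ((e * u + e' * v) ^ 2 <= (e ^ 2 + e' ^ 2) * N).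
    { unfold N. assert (0 <= (e * v - e' * u) ^ 2) by apply pow2_ge_0. nra. }
    assert (0 <= kap ^ 2 * N) by (apply Rmult_le_pos; nra).
    nra. }
  assert (Hsol : forall A B U V, Rabs A <= 2 -> Rabs B <= 2 ->
            Rabs U <= 2 * kap * N -> Rabs V <= 2 * kap * N ->
            Rabs (- (A * U - B * V) / D) <= 8 * kap * N / D).
  { intros A B U V hA hB hU hV.
    unfold Rdiv. rewrite Rabs_mult, Rabs_Ropp, (Rabs_right (/ D))
      by (left; apply Rinv_0_lt_compat; lra).
    apply Rmult_le_compat_r; [left; apply Rinv_0_lt_compat; lra|].
    eapply Rle_trans; [apply Rabs_triang|]. rewrite Rabs_Ropp, !Rabs_mult.
    assert (Rabs A * Rabs U <= 2 * (2 * kap * N))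
      by (apply Rmult_le_compat; auto; apply Rabs_pos).
    assert (Rabs B * Rabs V <= 2 * (2 * kap * N))
      by (apply Rmult_le_compat; auto; apply Rabs_pos).
    lra. }
  (* the exact inverse applied to the residuals [e u + e' v] *)
  replace (u - (J22 * hx - J12 * hz) / D)
    with (- (J22 * (e11 * u + e12 * v) - J12 * (e21 * u + e22 * v)) / D)
    by (rewrite <- E1, <- E2, HD; field; lra).
  replace (v - (J11 * hz - J21 * hx) / D)
    with (- (J11 * (e21 * u + e22 * v) - J21 * (e11 * u + e12 * v)) / D)
    by (rewrite <- E1, <- E2, HD; field; lra).
  split; apply Hsol; auto.
Qed.

Lemma Derive_at_0_of_quadratic_remainder (F : R -> R) l del K : 0 < del ->
  (forall h, Rabs h < del -> Rabs (F h - F 0 - l * h) <= K * h ^ 2) -> Derive F 0 = l.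
Proof.
  intros hdel H. apply is_derive_unique, is_derive_Reals. intros eps heps.
  assert (hK : 0 < Rabs K + 1) by (pose proof (Rabs_pos K); lra).
  assert (he : 0 < Rmin del (eps / (Rabs K + 1)))
    by (apply Rmin_pos; [lra|apply Rdiv_lt_0_compat; lra]).
  exists (mkposreal _ he). intros h hh0 hh. simpl in hh. rewrite Rplus_0_l.
  assert (h1 : Rabs h < del) by (eapply Rlt_le_trans; [apply hh|apply Rmin_l]).
  assert (h2 : Rabs h < eps / (Rabs K + 1)) by (eapply Rlt_le_trans; [apply hh|apply Rmin_r]).
  assert (hpos : 0 < Rabs h) by (apply Rabs_pos_lt; auto).
  replace ((F h - F 0) / h - l) with ((F h - F 0 - l * h) / h) by (field; auto).
  unfold Rdiv. rewrite Rabs_mult, Rabs_inv.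
  apply Rle_lt_trans with (K * h ^ 2 * / Rabs h).
  - apply Rmult_le_compat_r; [left; apply Rinv_0_lt_compat|apply H]; auto.
  - rewrite <- pow2_abs. replace (K * Rabs h ^ 2 * / Rabs h) with (K * Rabs h) by (field; lra).
    assert (K * Rabs h <= Rabs K * Rabs h) by (apply Rmult_le_compat_r; [lra|apply Rle_abs]).
    assert (Rabs K * Rabs h <= Rabs K * (eps / (Rabs K + 1)))
      by (apply Rmult_le_compat_l; [apply Rabs_pos|lra]).
    assert (Rabs K * (eps / (Rabs K + 1)) < eps).
    { apply (Rmult_lt_reg_r (Rabs K + 1)); auto.
      replace (Rabs K * (eps / (Rabs K + 1)) * (Rabs K + 1)) with (Rabs K * eps) by (field; lra).
      nra. }
    lra.
Qed.

(** * The equatorial Lagrangian map *)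

(* The particle with label [(q, r, 0)] sits at [(equator_x q r, 0, equator_z q r)]. *)
Definition equator_x (k c c0 t q r : R) : R :=
  q - c0 * t - / k * exp (k * r) * sin (k * (q - c * t)).
Definition equator_z (k c t q r : R) : R :=
  r + / k * exp (k * r) * cos (k * (q - c * t)).

Section EquatorialMap.

Variables (k c c0 t r0 : R).
Hypothesis hk : 0 < k.
Hypothesis hr0 : r0 < 0.

Let X := equator_x k c c0 t.
Let Z := equator_z k c t.
Let m := exp (k * r0).

Lemma steepness_bounds : 0 <= m < 1.
Proof. split; [left; apply exp_pos|apply exp_lt_1; nra]. Qed.

Lemma equator_map_near_translation q1 r1 q2 r2 : r1 <= r0 -> r2 <= r0 ->
  ((X q1 r1 - X q2 r2) - (q1 - q2)) ^ 2 + ((Z q1 r1 - Z q2 r2) - (r1 - r2)) ^ 2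
  <= m ^ 2 * ((q1 - q2) ^ 2 + (r1 - r2) ^ 2).
Proof.
  intros h1 h2.
  pose proof (polar_diff_sqr_le k r0 q1 r1 q2 r2 (k * (q1 - c * t)) (k * (q2 - c * t))
                hk h1 h2 ltac:(ring)) as W.
  unfold X, Z, m, equator_x, equator_z.
  replace ((q1 - c0 * t - / k * exp (k * r1) * sin (k * (q1 - c * t))
            - (q2 - c0 * t - / k * exp (k * r2) * sin (k * (q2 - c * t))) - (q1 - q2)) ^ 2 +
           (r1 + / k * exp (k * r1) * cos (k * (q1 - c * t))
            - (r2 + / k * exp (k * r2) * cos (k * (q2 - c * t))) - (r1 - r2)) ^ 2)
    with (/ k ^ 2 * ((exp (k * r1) * sin (k * (q1 - c * t))
                      - exp (k * r2) * sin (k * (q2 - c * t))) ^ 2 +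
                     (exp (k * r1) * cos (k * (q1 - c * t))
                      - exp (k * r2) * cos (k * (q2 - c * t))) ^ 2)) by (field; lra).
  apply Rle_trans with (/ k ^ 2 * (exp (k * r0) ^ 2 * (k ^ 2 * ((q1 - q2) ^ 2 + (r1 - r2) ^ 2)))).
  - apply Rmult_le_compat_l; auto. left; apply Rinv_0_lt_compat; nra.
  - right; field; lra.
Qed.

Lemma equator_map_expanding q1 r1 q2 r2 : r1 <= r0 -> r2 <= r0 ->
  (1 - m) ^ 2 * ((q1 - q2) ^ 2 + (r1 - r2) ^ 2)
  <= (X q1 r1 - X q2 r2) ^ 2 + (Z q1 r1 - Z q2 r2) ^ 2.
Proof.
  intros h1 h2.
  pose proof (near_identity_norm_ge m (q1 - q2) (r1 - r2) _ _ steepness_bounds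
                (equator_map_near_translation q1 r1 q2 r2 h1 h2)) as H.
  now replace (q1 - q2 + _) with (X q1 r1 - X q2 r2) in H by ring;
    replace (r1 - r2 + _) with (Z q1 r1 - Z q2 r2) in H by ring.
Qed.

Lemma equator_map_injective q1 r1 q2 r2 : r1 <= r0 -> r2 <= r0 ->
  X q1 r1 = X q2 r2 -> Z q1 r1 = Z q2 r2 -> q1 = q2 /\ r1 = r2.
Proof.
  intros h1 h2 Ex Ez.
  pose proof (equator_map_expanding q1 r1 q2 r2 h1 h2) as H.
  rewrite Ex, Ez, !Rminus_diag in H.
  pose proof steepness_bounds.
  assert (0 < (1 - m) ^ 2) by nra.
  assert (0 <= (q1 - q2) ^ 2) by apply pow2_ge_0.
  assert (0 <= (r1 - r2) ^ 2) by apply pow2_ge_0.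
  split; apply Rminus_diag_uniq, Rsqr_0_uniq; rewrite Rsqr_pow2; nra.
Qed.

Lemma equator_z_increasing q1 r1 q2 r2 : r1 <= r0 -> r2 <= r0 -> r2 <= r1 ->
  (1 - m) * (r1 - r2) - Rabs (X q1 r1 - X q2 r2) / (1 - m) <= Z q1 r1 - Z q2 r2.
Proof.
  intros h1 h2 h3.
  pose proof (near_identity_second_coord_ge m (q1 - q2) (r1 - r2) _ _ steepness_bounds
                (equator_map_near_translation q1 r1 q2 r2 h1 h2) ltac:(lra)) as H.
  now replace (q1 - q2 + _) with (X q1 r1 - X q2 r2) in H by ring;
    replace (r1 - r2 + _) with (Z q1 r1 - Z q2 r2) in H by ring.
Qed.

Lemma equator_z_lipschitz_on_x_level q1 r1 q2 r2 : r1 <= r0 -> r2 <= r0 ->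
  X q1 r1 = X q2 r2 -> (Z q1 r1 - Z q2 r2) ^ 2 <= 2 / (1 - m ^ 2) * (r1 - r2) ^ 2.
Proof.
  intros h1 h2 h3.
  pose proof (near_identity_fiber_bound m (q1 - q2) (r1 - r2) _ _ steepness_bounds
                (equator_map_near_translation q1 r1 q2 r2 h1 h2) ltac:(lra)) as H.
  now replace (r1 - r2 + _) with (Z q1 r1 - Z q2 r2) in H by ring.
Qed.

Lemma equator_x_onto r x : exists q, X q r = x.
Proof.
  set (B := / k * exp (k * r)).
  assert (hB : 0 < B) by (apply Rmult_lt_0_compat; [apply Rinv_0_lt_compat; lra|apply exp_pos]).
  assert (hb : forall q, Rabs (X q r - (q - c0 * t)) <= B).
  { intro q. unfold X, equator_x.
    replace (q - c0 * t - / k * exp (k * r) * sin (k * (q - c * t)) - (q - c0 * t))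
      with (- (B * sin (k * (q - c * t)))) by (unfold B; ring).
    rewrite Rabs_Ropp, Rabs_mult, (Rabs_right B) by lra.
    assert (Rabs (sin (k * (q - c * t))) <= 1) by (apply Rabs_le, SIN_bound). nra. }
  destruct (IVT (fun q => X q r - x) (x + c0 * t - B - 1) (x + c0 * t + B + 1))
    as [q [_ Hq]].
  - intro y. apply continuity_pt_minus; [|apply continuity_pt_const; now intros ? ?].
    apply derivable_continuous_pt, ex_derive_Reals_0.
    unfold X, equator_x. auto_derive. auto.
  - lra.
  - pose proof (hb (x + c0 * t - B - 1)) as H. apply Rabs_le_between in H. lra.
  - pose proof (hb (x + c0 * t + B + 1)) as H. apply Rabs_le_between in H. lra.
  - exists q. lra.
Qed.

(* Clamping the depth at [r0] keeps the choice where [equator_z_lipschitz_on_x_level]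
   applies. *)
Definition equator_q_of (x r : R) : R :=
  epsilon (inhabits 0) (fun q => X q (Rmin r r0) = x).

Lemma equator_q_of_spec x r : X (equator_q_of x r) (Rmin r r0) = x.
Proof.
  exact (epsilon_spec (inhabits 0) (fun q => X q (Rmin r r0) = x) (equator_x_onto _ x)).
Qed.

Lemma continuity_equator_z_on_x_level x r :
  continuity_pt (fun r => Z (equator_q_of x r) (Rmin r r0)) r.
Proof.
  pose proof steepness_bounds as hm.
  assert (0 < 1 - m ^ 2) by nra.
  apply (continuity_pt_of_sqr_lipschitz _ (2 / (1 - m ^ 2))); [left; apply Rdiv_lt_0_compat; lra|].
  intros a b. eapply Rle_trans.
  - apply equator_z_lipschitz_on_x_level; try apply Rmin_r. now rewrite !equator_q_of_spec.
  - apply Rmult_le_compat_l; [left; apply Rdiv_lt_0_compat; lra|apply Rmin_sqr_lipschitz].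
Qed.

Lemma equator_map_locally_onto q0 rs x z : rs < r0 ->
  Rabs (x - X q0 rs) <= (1 - m) ^ 2 * (r0 - rs) / 4 ->
  Rabs (z - Z q0 rs) <= (1 - m) ^ 2 * (r0 - rs) / 4 ->
  exists q r, r <= r0 /\ X q r = x /\ Z q r = z.
Proof.
  intros hrs hx hz.
  pose proof steepness_bounds as hm.
  set (d := r0 - rs) in *. set (del := (1 - m) ^ 2 * d / 4) in *.
  (* the level set [X = x] is a graph over [r] along which [Z] increases by at least
     [(1 - m) d] between depths [rs - d] and [r0] *)
  assert (hdel : del * (1 + / (1 - m)) < (1 - m) * d).
  { unfold del.
    assert (0 < d) by (unfold d; lra).
    replace ((1 - m) ^ 2 * d / 4 * (1 + / (1 - m))) with ((1 - m) * d * ((2 - m) / 4))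
      by (field; lra).
    assert (0 < (1 - m) * d) by nra. nra. }
  assert (hinv : 0 < / (1 - m)) by (apply Rinv_0_lt_compat; lra).
  assert (Hx : Rabs (x - X q0 rs) / (1 - m) <= del * / (1 - m))
    by (apply Rmult_le_compat_r; lra).
  apply Rabs_le_between in hz.
  set (psi := fun r => Z (equator_q_of x r) (Rmin r r0) - z).
  destruct (Ranalysis5.IVT_interv psi (rs - d) r0) as [r [hr Hr]].
  - intros r _. apply continuity_pt_minus; [apply continuity_equator_z_on_x_level|].
    apply continuity_pt_const. now intros ? ?.
  - unfold d; lra.
  - assert (Hmin : Rmin (rs - d) r0 = rs - d) by (apply Rmin_left; unfold d; lra).
    pose proof (equator_z_increasing q0 rs (equator_q_of x (rs - d)) (Rmin (rs - d) r0)
                  ltac:(lra) (Rmin_r _ _) ltac:(rewrite Hmin; unfold d; lra)) as H.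
    unfold psi. rewrite equator_q_of_spec, Rabs_minus_sym, Hmin in H. rewrite Hmin.
    replace (rs - (rs - d)) with d in H by ring. lra.
  - assert (Hmin : Rmin r0 r0 = r0) by (apply Rmin_left; lra).
    pose proof (equator_z_increasing (equator_q_of x r0) (Rmin r0 r0) q0 rs
                  (Rmin_r _ _) ltac:(lra) ltac:(rewrite Hmin; lra)) as H.
    unfold psi. rewrite equator_q_of_spec, Hmin in H. rewrite Hmin. fold d in H. lra.
  - exists (equator_q_of x r), r.
    assert (Hmin : Rmin r r0 = r) by (apply Rmin_left; lra).
    pose proof (equator_q_of_spec x r) as Hq. unfold psi in Hr. rewrite Hmin in Hq, Hr.
    repeat split; lra.
Qed.

Lemma equator_map_mean_value_form q0 rs q r : rs <= r0 -> r <= r0 ->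
  let a := exp (k * rs) in let th := k * (q0 - c * t) in
  let N := (k * m) ^ 2 * ((q - q0) ^ 2 + (r - rs) ^ 2) in
  exists e11 e12 e21 e22,
    e11 ^ 2 <= N /\ e12 ^ 2 <= N /\ e21 ^ 2 <= N /\ e22 ^ 2 <= N /\
    (1 - a * cos th + e11) * (q - q0) + (- (a * sin th) + e12) * (r - rs) = X q r - X q0 rs /\
    (- (a * sin th) + e21) * (q - q0) + (1 + a * cos th + e22) * (r - rs) = Z q r - Z q0 rs.
Proof.
  intros hrs hr a th N.
  pose proof (polar_components_diff_sqr_le k r0 c t hk) as Hpolar. fold m in Hpolar.
  assert (HXq : forall r x, derivable_pt_lim (fun q => X q r) x
                  (1 - exp (k * r) * cos (k * (x - c * t))))
    by (intros; apply is_derive_Reals; unfold X, equator_x;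
        auto_derive; auto; unfold Rminus; field; lra).
  assert (HXr : forall q x, derivable_pt_lim (fun r => X q r) x
                  (- (exp (k * x) * sin (k * (q - c * t)))))
    by (intros; apply is_derive_Reals; unfold X, equator_x;
        auto_derive; auto; unfold Rminus; field; lra).
  assert (HZq : forall r x, derivable_pt_lim (fun q => Z q r) x
                  (- (exp (k * r) * sin (k * (x - c * t)))))
    by (intros; apply is_derive_Reals; unfold Z, equator_z;
        auto_derive; auto; unfold Rminus; field; lra).
  assert (HZr : forall q x, derivable_pt_lim (fun r => Z q r) x
                  (1 + exp (k * x) * cos (k * (q - c * t))))
    by (intros; apply is_derive_Reals; unfold Z, equator_z;
        auto_derive; auto; unfold Rminus; field; lra).
  destruct (MVT_between _ _ q0 q (HXq rs)) as [z1 [hz1 E1]].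
  destruct (MVT_between _ _ rs r (HXr q)) as [z2 [hz2 E2]].
  destruct (MVT_between _ _ q0 q (HZq rs)) as [z3 [hz3 E3]].
  destruct (MVT_between _ _ rs r (HZr q)) as [z4 [hz4 E4]].
  exists (- (exp (k * rs) * cos (k * (z1 - c * t)) - a * cos th)),
         (- (exp (k * z2) * sin (k * (q - c * t)) - a * sin th)),
         (- (exp (k * rs) * sin (k * (z3 - c * t)) - a * sin th)),
         (exp (k * z4) * cos (k * (q - c * t)) - a * cos th).
  assert (hz1' : (z1 - q0) ^ 2 <= (q - q0) ^ 2) by (destruct hz1; nra).
  assert (hz3' : (z3 - q0) ^ 2 <= (q - q0) ^ 2) by (destruct hz3; nra).
  assert (hz2' : z2 <= r0 /\ (z2 - rs) ^ 2 <= (r - rs) ^ 2) by (destruct hz2; split; nra).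
  assert (hz4' : z4 <= r0 /\ (z4 - rs) ^ 2 <= (r - rs) ^ 2) by (destruct hz4; split; nra).
  assert (0 <= (k * m) ^ 2) by apply pow2_ge_0.
  assert (0 <= (r - rs) ^ 2) by apply pow2_ge_0.
  assert (0 <= (q - q0) ^ 2) by apply pow2_ge_0.
  unfold N, a, th. repeat split.
  - destruct (Hpolar z1 rs q0 rs hrs hrs) as [_ W].
    replace (rs - rs) with 0 in W by ring. nra.
  - destruct (Hpolar q z2 q0 rs (proj1 hz2') hrs) as [W _]. nra.
  - destruct (Hpolar z3 rs q0 rs hrs hrs) as [W _].
    replace (rs - rs) with 0 in W by ring. nra.
  - destruct (Hpolar q z4 q0 rs (proj1 hz4') hrs) as [_ W]. nra.
  - replace (X q r - X q0 rs) with ((X q r - X q rs) + (X q rs - X q0 rs)) by ring.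
    rewrite E1, E2. ring.
  - replace (Z q r - Z q0 rs) with ((Z q r - Z q rs) + (Z q rs - Z q0 rs)) by ring.
    rewrite E3, E4. ring.
Qed.

Lemma equator_map_inverse_linearization q0 rs q r : rs <= r0 -> r <= r0 ->
  let a := exp (k * rs) in let th := k * (q0 - c * t) in let Dt := 1 - a ^ 2 in
  let hx := X q r - X q0 rs in let hz := Z q r - Z q0 rs in
  let C := 8 * (k * m) / ((1 - m) ^ 2 * Dt) in
  Rabs ((q - q0) - ((1 + a * cos th) * hx + a * sin th * hz) / Dt) <= C * (hx ^ 2 + hz ^ 2) /\
  Rabs ((r - rs) - ((1 - a * cos th) * hz + a * sin th * hx) / Dt) <= C * (hx ^ 2 + hz ^ 2).
Proof.
  intros hrs hr a th Dt hx hz C.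
  pose proof steepness_bounds as hm.
  assert (ha : 0 < a < 1) by (split; [apply exp_pos|apply exp_lt_1; nra]).
  assert (hD : 0 < Dt) by (unfold Dt; nra).
  destruct (equator_map_mean_value_form q0 rs q r hrs hr)
    as (e11 & e12 & e21 & e22 & b11 & b12 & b21 & b22 & E1 & E2).
  assert (Hcos : Rabs (a * cos th) <= 1).
  { rewrite Rabs_mult, (Rabs_right a) by lra.
    assert (Rabs (cos th) <= 1) by (apply Rabs_le, COS_bound).
    pose proof (Rabs_pos (cos th)). nra. }
  assert (Hsin : Rabs (a * sin th) <= 1).
  { rewrite Rabs_mult, (Rabs_right a) by lra.
    assert (Rabs (sin th) <= 1) by (apply Rabs_le, SIN_bound).
    pose proof (Rabs_pos (sin th)). nra. }
  apply Rabs_le_between in Hcos, Hsin.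
  destruct (perturbed_linear_system_solution (1 - a * cos th) (- (a * sin th)) (- (a * sin th))
              (1 + a * cos th) e11 e12 e21 e22 (q - q0) (r - rs) hx hz Dt (k * m))
    as [L1 L2]; auto; try (apply Rabs_le; lra).
  { unfold Dt. pose proof (sin2_cos2 th). unfold Rsqr in *. nra. }
  { apply Rmult_le_pos; lra. }
  (* the expansion bound converts [|(q - q0, r - rs)|^2] into [|(hx, hz)|^2] *)
  pose proof (equator_map_expanding q r q0 rs hr hrs) as S1. fold hx hz in S1.
  assert (HC : 8 * (k * m) * ((q - q0) ^ 2 + (r - rs) ^ 2) / Dt <= C * (hx ^ 2 + hz ^ 2)).
  { unfold C.
    replace (8 * (k * m) / ((1 - m) ^ 2 * Dt) * (hx ^ 2 + hz ^ 2))
      with (8 * (k * m) * ((hx ^ 2 + hz ^ 2) / (1 - m) ^ 2) / Dt) by (field; lra).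
    unfold Rdiv. apply Rmult_le_compat_r; [left; apply Rinv_0_lt_compat; lra|].
    apply Rmult_le_compat_l; [assert (0 <= k * m) by (apply Rmult_le_pos; lra); lra|].
    apply (Rmult_le_reg_l ((1 - m) ^ 2)); [nra|].
    replace ((1 - m) ^ 2 * ((hx ^ 2 + hz ^ 2) * / (1 - m) ^ 2)) with (hx ^ 2 + hz ^ 2)
      by (field; lra).
    lra. }
  split.
  - replace ((1 + a * cos th) * hx + a * sin th * hz)
      with ((1 + a * cos th) * hx - - (a * sin th) * hz) by ring. lra.
  - replace ((1 - a * cos th) * hz + a * sin th * hx)
      with ((1 - a * cos th) * hz - - (a * sin th) * hx) by ring. lra.
Qed.

End EquatorialMap.

(** * The Eulerian velocity field on the equator *)

Lemma fshape_0 Om g Re k c0 : fshape Om g Re k c0 0 = 0.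
Proof. unfold fshape. ring. Qed.

Lemma has_deriv3_lagr Om g Re k c0 L t :
  has_deriv3 (lagr Om g Re k c0 L) t (lagr_vel Om g Re k c0 L t).
Proof.
  destruct L as [[q r] s]. unfold has_deriv3.
  repeat split; apply Derive_correct; unfold lagr, v1, v2, v3, mk3; simpl; auto_derive; auto.
Qed.

(* [strain_rate (c k) (e^{k r})] is the amplitude of the oscillating part of the
   velocity gradient on the particle path of depth label [r]. *)
Definition strain_rate (ck a : R) : R := ck * a / (1 - a ^ 2).

Section EquatorialFlow.

Variables (Om g Re k c0 r0 : R).
Hypothesis hk : 0 < k.
Hypothesis hr0 : r0 < 0.

Let c := wave_speed Om g k c0.
Let X := equator_x k c c0.
Let Z := equator_z k c.
Let pos := lagr Om g Re k c0.
Let vel := lagr_vel Om g Re k c0.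
Let u := U Om g Re k c0 r0.

Lemma lagr_equator q r t : pos (mk3 q r 0) t = mk3 (X t q r) 0 (Z t q r).
Proof.
  unfold pos, lagr, X, Z, equator_x, equator_z, v1, v2, v3, mk3. simpl.
  rewrite fshape_0, Rminus_0_r. reflexivity.
Qed.

Lemma lagr_equator_shift q r t h v : v2 v = 0 ->
  add3 (pos (mk3 q r 0) t) (scal3 h v) = mk3 (X t q r + h * v1 v) 0 (Z t q r + h * v3 v).
Proof.
  intros hv. rewrite lagr_equator.
  unfold add3, scal3, mk3, v1, v2, v3 in *; simpl in *. rewrite hv. f_equal; f_equal; ring.
Qed.

Lemma lagr_vel_equator q r t : vel (mk3 q r 0) t =
  mk3 (- c0 + c * k * (Z t q r - r)) 0 (c * k * (q - c0 * t - X t q r)).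
Proof.
  unfold vel, lagr_vel, lagr, X, Z, equator_x, equator_z.
  unfold v1, v2, v3, mk3; simpl. rewrite fshape_0, Rminus_0_r. fold c.
  f_equal; [f_equal|].
  - apply is_derive_unique. auto_derive; auto. unfold Rminus. field. lra.
  - apply Derive_const.
  - apply is_derive_unique. auto_derive; auto. unfold Rminus. field. lra.
Qed.

Lemma U_equator Y t q r : r <= r0 -> pos (mk3 q r 0) t = Y ->
  exists q' r', r' <= r0 /\ pos (mk3 q' r' 0) t = Y /\ u Y t = vel (mk3 q' r' 0) t.
Proof.
  intros hr HY.
  set (P := fun L => label_ok Om g Re k c0 r0 L /\ lagr Om g Re k c0 L t = Y).
  assert (HP : P (epsilon V3_inhabited P)).
  { apply epsilon_spec. exists (mk3 q r 0). split; [|exact HY].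
    unfold label_ok, v2, v3, mk3; simpl. rewrite fshape_0. lra. }
  unfold u, U. fold P.
  destruct (epsilon V3_inhabited P) as [[q' r'] s] eqn:EL. destruct HP as [[hr' _] HL].
  (* the label's [s] is the [y] coordinate, which vanishes on the equator *)
  assert (s = 0) as ->.
  { apply (f_equal v2) in HL, HY. rewrite lagr_equator in HY. unfold v2, mk3 in *; simpl in *.
    lra. }
  exists q', r'. repeat split; auto.
Qed.

Lemma U_on_equatorial_path q r t : r <= r0 ->
  u (pos (mk3 q r 0) t) t = vel (mk3 q r 0) t.
Proof.
  intros hr. destruct (U_equator _ t q r hr eq_refl) as (q' & r' & hr' & HL & ->).
  rewrite !lagr_equator in HL.
  assert (X t q' r' = X t q r /\ Z t q' r' = Z t q r) as [Ex Ez]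
    by (unfold mk3 in HL; now inversion HL).
  now destruct (equator_map_injective k c c0 t r0 hk hr0 q' r' q r hr' hr Ex Ez) as [-> ->].
Qed.

(* The [y]-velocity vanishes at every label, whichever label [U] picks. *)
Lemma gradU_row1 Y t j : gradU Om g Re k c0 r0 Y t 1%nat j = 0.
Proof.
  unfold gradU.
  replace (fun h => comp3 1 (U Om g Re k c0 r0 (add3 Y (scal3 h (e3 j))) t))
    with (fun _ : R => 0); [apply Derive_const|].
  apply functional_extensionality. intro h.
  unfold U. destruct (epsilon _ _) as [[q r] s].
  unfold lagr_vel, comp3, mk3, v2; simpl. symmetry. apply Derive_const.
Qed.

(* Near the path, [u] is the velocity at a label that depends on the displacement [h v]
   to first order through the inverse of the linearized equatorial map. *)
Lemma U_near_equatorial_path t q0 rs v h : v2 v = 0 -> v1 v ^ 2 + v3 v ^ 2 <= 1 -> rs < r0 ->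
  Rabs h < (1 - exp (k * r0)) ^ 2 * (r0 - rs) / 4 ->
  let a := exp (k * rs) in let th := k * (q0 - c * t) in let Dt := 1 - a ^ 2 in
  let wq := ((1 + a * cos th) * v1 v + a * sin th * v3 v) / Dt in
  let wr := ((1 - a * cos th) * v3 v + a * sin th * v1 v) / Dt in
  let C := 8 * (k * exp (k * r0)) / ((1 - exp (k * r0)) ^ 2 * Dt) in
  exists q r,
    u (add3 (pos (mk3 q0 rs 0) t) (scal3 h v)) t =
      mk3 (- c0 + c * k * (Z t q0 rs + h * v3 v - r)) 0
          (c * k * (q - c0 * t - (X t q0 rs + h * v1 v))) /\
    Rabs (q - q0 - h * wq) <= C * h ^ 2 /\ Rabs (r - rs - h * wr) <= C * h ^ 2.
Proof.
  intros hv hv13 hrs hh a th Dt wq wr C.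
  pose proof (steepness_bounds k r0 hk hr0) as hm.
  assert (ha : 0 < a < 1) by (split; [apply exp_pos|apply exp_lt_1; nra]).
  assert (hD : 0 < Dt) by (unfold Dt; nra).
  assert (hC : 0 <= C).
  { unfold C. apply Rmult_le_pos; [nra|].
    left; apply Rinv_0_lt_compat, Rmult_lt_0_compat; nra. }
  assert (Rabs (v1 v) <= 1)
    by (apply Rabs_le_of_sqr_le; [pose proof (pow2_ge_0 (v3 v)); lra|lra]).
  assert (Rabs (v3 v) <= 1)
    by (apply Rabs_le_of_sqr_le; [pose proof (pow2_ge_0 (v1 v)); lra|lra]).
  assert (hx : Rabs (X t q0 rs + h * v1 v - X t q0 rs) <= (1 - exp (k * r0)) ^ 2 * (r0 - rs) / 4)
    by (replace (_ + h * v1 v - _) with (h * v1 v) by ring;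
        rewrite Rabs_mult; pose proof (Rabs_pos h); nra).
  assert (hz : Rabs (Z t q0 rs + h * v3 v - Z t q0 rs) <= (1 - exp (k * r0)) ^ 2 * (r0 - rs) / 4)
    by (replace (_ + h * v3 v - _) with (h * v3 v) by ring;
        rewrite Rabs_mult; pose proof (Rabs_pos h); nra).
  destruct (equator_map_locally_onto k c c0 t r0 hk hr0 q0 rs _ _ hrs hx hz)
    as (q1 & r1 & hr1 & Ex1 & Ez1).
  rewrite lagr_equator_shift by auto.
  destruct (U_equator (mk3 (X t q0 rs + h * v1 v) 0 (Z t q0 rs + h * v3 v)) t q1 r1 hr1)
    as (q & r & hr & HL & ->).
  { rewrite lagr_equator. fold X Z in Ex1, Ez1. now rewrite Ex1, Ez1. }
  rewrite lagr_equator in HL.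
  assert (X t q r = X t q0 rs + h * v1 v /\ Z t q r = Z t q0 rs + h * v3 v) as [Ex Ez]
    by (unfold mk3 in HL; now inversion HL).
  exists q, r. rewrite lagr_vel_equator, Ex, Ez. split; [reflexivity|].
  destruct (equator_map_inverse_linearization k c c0 t r0 hk hr0 q0 rs q r ltac:(lra) hr)
    as [J1 J2].
  fold X Z a th Dt C in J1, J2. rewrite Ex, Ez in J1, J2.
  replace (X t q0 rs + h * v1 v - X t q0 rs) with (h * v1 v) in J1, J2 by ring.
  replace (Z t q0 rs + h * v3 v - Z t q0 rs) with (h * v3 v) in J1, J2 by ring.
  assert (HB : C * ((h * v1 v) ^ 2 + (h * v3 v) ^ 2) <= C * h ^ 2).
  { apply Rmult_le_compat_l; auto. pose proof (pow2_ge_0 h). nra. }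
  split.
  - replace (h * wq) with (((1 + a * cos th) * (h * v1 v) + a * sin th * (h * v3 v)) / Dt)
      by (unfold wq; field; lra). lra.
  - replace (h * wr) with (((1 - a * cos th) * (h * v3 v) + a * sin th * (h * v1 v)) / Dt)
      by (unfold wr; field; lra). lra.
Qed.

Lemma Derive_U_equator t q0 rs v : v2 v = 0 -> v1 v ^ 2 + v3 v ^ 2 <= 1 -> rs < r0 ->
  let a := exp (k * rs) in let th := k * (q0 - c * t) in let Dt := 1 - a ^ 2 in
  let wq := ((1 + a * cos th) * v1 v + a * sin th * v3 v) / Dt in
  let wr := ((1 - a * cos th) * v3 v + a * sin th * v1 v) / Dt in
  Derive (fun h => v1 (u (add3 (pos (mk3 q0 rs 0) t) (scal3 h v)) t)) 0 = c * k * (v3 v - wr) /\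
  Derive (fun h => v3 (u (add3 (pos (mk3 q0 rs 0) t) (scal3 h v)) t)) 0 = c * k * (wq - v1 v).
Proof.
  intros hv hv13 hrs a th Dt wq wr.
  pose proof (steepness_bounds k r0 hk hr0) as hm.
  set (C := 8 * (k * exp (k * r0)) / ((1 - exp (k * r0)) ^ 2 * Dt)).
  assert (hC : 0 <= C).
  { assert (0 < Dt) by (unfold Dt, a; pose proof (exp_pos (k * rs));
                        pose proof (exp_lt_1 (k * rs) ltac:(nra)); nra).
    unfold C. apply Rmult_le_pos; [nra|].
    left; apply Rinv_0_lt_compat, Rmult_lt_0_compat; nra. }
  assert (hK : 0 <= Rabs (c * k) * C) by (apply Rmult_le_pos; [apply Rabs_pos|lra]).
  assert (HU0 : u (add3 (pos (mk3 q0 rs 0) t) (scal3 0 v)) t =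
                mk3 (- c0 + c * k * (Z t q0 rs - rs)) 0 (c * k * (q0 - c0 * t - X t q0 rs))).
  { replace (add3 _ _) with (pos (mk3 q0 rs 0) t).
    - rewrite U_on_equatorial_path by lra. apply lagr_vel_equator.
    - rewrite lagr_equator_shift, lagr_equator by auto. unfold mk3. f_equal; [f_equal|]; ring. }
  assert (hdel : 0 < (1 - exp (k * r0)) ^ 2 * (r0 - rs) / 4)
    by (apply Rdiv_lt_0_compat; [apply Rmult_lt_0_compat; nra|lra]).
  split; apply (Derive_at_0_of_quadratic_remainder _ _ _ (Rabs (c * k) * C) hdel);
    intros h hh;
    destruct (U_near_equatorial_path t q0 rs v h hv hv13 hrs hh) as (q & r & -> & Bq & Br);
    rewrite HU0; cbn [v1 v3 mk3 fst snd].
  - replace (- c0 + c * k * (Z t q0 rs + h * v3 v - r) - (- c0 + c * k * (Z t q0 rs - rs))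
             - c * k * (v3 v - wr) * h) with (- (c * k) * (r - rs - h * wr)) by ring.
    rewrite Rabs_mult, Rabs_Ropp, Rmult_assoc. apply Rmult_le_compat_l; auto using Rabs_pos.
  - replace (c * k * (q - c0 * t - (X t q0 rs + h * v1 v)) - c * k * (q0 - c0 * t - X t q0 rs)
             - c * k * (wq - v1 v) * h) with (c * k * (q - q0 - h * wq)) by ring.
    rewrite Rabs_mult, Rmult_assoc. apply Rmult_le_compat_l; auto using Rabs_pos.
Qed.

Lemma gradU_equator t q0 rs : rs < r0 ->
  let G := gradU Om g Re k c0 r0 (pos (mk3 q0 rs 0) t) t in
  let a := exp (k * rs) in let th := k * (q0 - c * t) in
  let kap := strain_rate (c * k) a in
  G 0%nat 0%nat = - (kap * sin th) /\ G 0%nat 2%nat = kap * (cos th - a) /\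
  G 2%nat 0%nat = kap * (cos th + a) /\ G 2%nat 2%nat = kap * sin th.
Proof.
  intros hrs G a th kap.
  assert (ha : 0 < a < 1) by (split; [apply exp_pos|apply exp_lt_1; nra]).
  assert (hD : 1 - a ^ 2 <> 0) by nra.
  destruct (Derive_U_equator t q0 rs (e3 0) eq_refl ltac:(cbn; lra) hrs) as [G00 G20].
  destruct (Derive_U_equator t q0 rs (e3 2) eq_refl ltac:(cbn; lra) hrs) as [G02 G22].
  unfold G, gradU. cbn [comp3]. fold pos u. rewrite G00, G20, G02, G22.
  fold a th. unfold kap, strain_rate. cbn [e3 v1 v3 mk3 fst snd].
  repeat split; field; auto.
Qed.

End EquatorialFlow.

(** * A growing short-wavelength perturbation *)

(* With [xi = e_y], the amplitude equation restricted to the [(x, z)] plane becomes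
   autonomous in the frame rotating with half the wave phase; [frame_rotation] is the
   resulting angular velocity. *)
Definition frame_rotation (Om ck a : R) : R := strain_rate ck a * a - 2 * Om - ck / 2.

Lemma rotating_frame_eigenvector Om ck a kap om mu s co :
  s ^ 2 + co ^ 2 = 1 -> om = kap * a - 2 * Om - ck / 2 -> mu * mu = (kap - om) * (kap + om) ->
  let B1 := co * (kap - om) + s * mu in let B3 := s * (kap - om) - co * mu in
  mu * B1 + ck / 2 * B3 =
    - (2 * Om * B3 - kap * (2 * s * co) * B1 + kap * (co ^ 2 - s ^ 2 - a) * B3) /\
  mu * B3 - ck / 2 * B1 =
    - (- (2 * Om) * B1 + kap * (co ^ 2 - s ^ 2 + a) * B1 + kap * (2 * s * co) * B3).
Proof.
  intros hsc hom hmu B1 B3.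
  set (q := s ^ 2 + co ^ 2 - 1). set (Delta := (kap - om) * (kap + om) - mu * mu).
  assert (hq : q = 0) by (unfold q; lra). assert (hD : Delta = 0) by (unfold Delta; lra).
  (* both identities are combinations of [q = 0] and [Delta = 0] *)
  split; apply Rminus_diag_uniq.
  - transitivity (- s * Delta + kap * q * (- co * mu - s * (kap - om))).
    + unfold q, Delta, B1, B3. rewrite hom. field.
    + rewrite hq, hD. ring.
  - transitivity (co * Delta + kap * q * (- s * mu + co * (kap - om))).
    + unfold q, Delta, B1, B3. rewrite hom. field.
    + rewrite hq, hD. ring.
Qed.

Lemma norm3_e2 : norm3 (mk3 0 1 0) = 1.
Proof.
  unfold norm3, dot3, v1, v2, v3, mk3; simpl.
  replace (0 * 0 + 1 * 1 + 0 * 0) with 1 by ring. apply sqrt_1.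
Qed.

(* The mode grows like [e^{mu t}] while turning at the rate [- ck / 2], i.e. with half
   the wave phase of the particle with label [q = 0]. *)
Definition growing_mode (mu ck p1 p2 t : R) : V3 :=
  let phi := - (ck * t) / 2 in
  mk3 (exp (mu * t) * (cos phi * p1 + sin phi * p2)) 0
      (exp (mu * t) * (sin phi * p1 - cos phi * p2)).

Lemma norm3_growing_mode mu ck p1 p2 t : p1 ^ 2 + p2 ^ 2 = 1 ->
  norm3 (growing_mode mu ck p1 p2 t) = exp (mu * t).
Proof.
  intros hp. unfold growing_mode, norm3, dot3, v1, v2, v3, mk3; simpl.
  set (phi := - (ck * t) / 2). set (E := exp (mu * t)).
  pose proof (sin2_cos2 phi). unfold Rsqr in *.
  replace (E * (cos phi * p1 + sin phi * p2) * (E * (cos phi * p1 + sin phi * p2)) + 0 * 0 +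
           E * (sin phi * p1 - cos phi * p2) * (E * (sin phi * p1 - cos phi * p2)))
    with (E * E * ((sin phi * sin phi + cos phi * cos phi) * (p1 ^ 2 + p2 ^ 2))) by ring.
  rewrite H, hp, !Rmult_1_r. apply sqrt_square. left; apply exp_pos.
Qed.

Lemma has_deriv3_growing_mode mu ck p1 p2 t :
  let b := growing_mode mu ck p1 p2 in
  has_deriv3 b t (mk3 (mu * v1 (b t) + ck / 2 * v3 (b t)) 0 (mu * v3 (b t) - ck / 2 * v1 (b t))).
Proof.
  intros b. unfold has_deriv3, b, growing_mode; cbn [v1 v2 v3 mk3 fst snd].
  split; [|split]; auto_derive; auto; unfold Rdiv; ring.
Qed.

(* With [xi = e_y] and no meridional motion the projection term only restores [b_y' = 0]. *)
Lemma amplitude_rhs_equator Om Re (G : M3) b : (forall j, G 1%nat j = 0) -> v2 b = 0 ->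
  add3 (opp3 (add3 (mulMV (Lmat Om Re 0) b) (mulMV G b)))
       (scal3 (dot3 (add3 (mulMV (Lmat Om Re 0) b) (scal3 2 (mulMV G b))) (mk3 0 1 0)
               / norm3 (mk3 0 1 0) ^ 2) (mk3 0 1 0))
  = mk3 (- (2 * Om * v3 b + G 0%nat 0%nat * v1 b + G 0%nat 2%nat * v3 b)) 0
        (- (- (2 * Om) * v1 b + G 2%nat 0%nat * v1 b + G 2%nat 2%nat * v3 b)).
Proof.
  intros row1 hb. rewrite norm3_e2.
  destruct b as [[b1 b2] b3]. unfold v2 in hb; simpl in hb. subst b2.
  unfold add3, opp3, scal3, mulMV, dot3, Lmat, mk3, v1, v2, v3; cbn. rewrite !row1.
  f_equal; [f_equal|]; field.
Qed.

Lemma equatorial_wkb_solution Om g Re k c0 r0 rs mu : 0 < k -> r0 < 0 -> rs < r0 ->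
  let ck := wave_speed Om g k c0 * k in let a := exp (k * rs) in
  let kap := strain_rate ck a in let om := frame_rotation Om ck a in
  0 < kap - om -> mu * mu = (kap - om) * (kap + om) ->
  exists b0 b, dot3 (mk3 0 1 0) b0 = 0 /\
    wkb_solution Om g Re k c0 r0 (lagr Om g Re k c0 (mk3 0 rs 0) 0) (mk3 0 1 0) b0
      (lagr Om g Re k c0 (mk3 0 rs 0)) (fun _ => mk3 0 1 0) b /\
    forall t, norm3 (b t) = exp (mu * t).
Proof.
  intros hk hr0 hrs ck a kap om hpos hmu.
  set (c := wave_speed Om g k c0) in *.
  set (n := sqrt ((kap - om) ^ 2 + mu ^ 2)).
  assert (hn2 : n ^ 2 = (kap - om) ^ 2 + mu ^ 2) by (apply pow2_sqrt; nra).
  assert (hn : 0 < n) by (apply sqrt_lt_R0; nra).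
  set (b := growing_mode mu ck ((kap - om) / n) (mu / n)).
  exists (b 0), b. split; [|split].
  - unfold dot3, b, growing_mode, v1, v2, v3, mk3; simpl. ring.
  - split; [reflexivity|]. split; [reflexivity|]. split; [reflexivity|].
    intros t _. cbv zeta.
    assert (hy : v2 (lagr Om g Re k c0 (mk3 0 rs 0) t) = 0) by (now rewrite lagr_equator).
    rewrite hy.
    assert (row1 : forall j, gradU Om g Re k c0 r0 (lagr Om g Re k c0 (mk3 0 rs 0) t) t 1%nat j = 0)
      by (intro; apply gradU_row1).
    split; [|split].
    + rewrite U_on_equatorial_path by lra. apply has_deriv3_lagr.
    + unfold has_deriv3, opp3, scal3, mulMV, transp. cbn [v1 v2 v3 mk3 fst snd].
      rewrite !row1.
      split; [|split]; (match goal with |- is_derive _ _ ?v => replace v with 0 by ring end);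
        auto_derive; auto.
    + rewrite amplitude_rhs_equator by auto.
      destruct (gradU_equator Om g Re k c0 r0 hk hr0 t 0 rs hrs) as (-> & -> & -> & ->).
      fold c ck a kap.
      set (phi := - (ck * t) / 2). set (s := sin phi). set (co := cos phi).
      assert (hth : k * (0 - c * t) = 2 * phi) by (unfold phi, ck; field).
      rewrite hth, sin_2a, cos_2a. fold s co.
      assert (hsc : s ^ 2 + co ^ 2 = 1)
        by (rewrite <- (sin2_cos2 phi); unfold Rsqr, s, co; ring).
      destruct (rotating_frame_eigenvector Om ck a kap om mu s co hsc eq_refl hmu) as [I1 I3].
      set (B1 := co * (kap - om) + s * mu) in I1, I3.
      set (B3 := s * (kap - om) - co * mu) in I1, I3.
      set (E := exp (mu * t)).
      assert (Hb : b t = mk3 (E / n * B1) 0 (E / n * B3))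
        by (unfold b, growing_mode, mk3; fold phi s co E;
            f_equal; [f_equal|]; unfold B1, B3; field; lra).
      pose proof (has_deriv3_growing_mode mu ck ((kap - om) / n) (mu / n) t) as Hd.
      cbv zeta in Hd. fold b in Hd. rewrite Hb in Hd |- *. cbn [v1 v2 v3 mk3 fst snd] in Hd |- *.
      (* the mode is an eigenvector, in the rotating frame, of the linearized amplitude
         equation *)
      replace (mk3 _ 0 _) with (mk3 (mu * (E / n * B1) + ck / 2 * (E / n * B3)) 0
                                    (mu * (E / n * B3) - ck / 2 * (E / n * B1))); [exact Hd|].
      unfold mk3. f_equal; [f_equal|].
      * transitivity (E / n * (mu * B1 + ck / 2 * B3)); [ring|]. rewrite I1. ring.
      * transitivity (E / n * (mu * B3 - ck / 2 * B1)); [ring|]. rewrite I3. ring.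
  - intro t. apply norm3_growing_mode. field_simplify_eq; [lra|lra].
Qed.

Lemma Lambda_ge_of_growing_solution Om g Re k c0 r0 X0 xi0 b0 X xi b mu :
  norm3 xi0 = 1 -> dot3 xi0 b0 = 0 -> wkb_solution Om g Re k c0 r0 X0 xi0 b0 X xi b ->
  (forall t, norm3 (b t) = exp (mu * t)) ->
  Rbar_le (Finite mu) (Lambda Om g Re k c0 r0 X0).
Proof.
  intros hxi hdot hsol hb.
  assert (hb0 : norm3 b0 = 1).
  { destruct hsol as (_ & _ & <- & _). now rewrite hb, Rmult_0_r, exp_0. }
  assert (Hsup : forall t, Rbar_le (Finite (exp (mu * t))) (sup_amp Om g Re k c0 r0 X0 t)).
  { intro t. unfold sup_amp.
    match goal with |- Rbar_le _ (Rbar_lub ?E) =>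
      destruct (proj2_sig (Rbar_ex_lub E)) as [ub _]; apply ub end.
    exists xi0, b0, X, xi, b. rewrite hb. now repeat (split; [assumption|]). }
  assert (Hrate : forall t, 1 <= t -> Rbar_le (Finite mu) (growth_rate Om g Re k c0 r0 X0 t)).
  { intros t ht. pose proof (Hsup t) as Hs. unfold growth_rate.
    destruct (sup_amp Om g Re k c0 r0 X0 t) as [v| |]; simpl in Hs |- *; auto.
    pose proof (exp_pos (mu * t)).
    destruct (Rlt_dec 0 v) as [hv|hv]; [|lra].
    assert (ln (exp (mu * t)) <= ln v) by (apply ln_le; auto).
    rewrite ln_exp in H0.
    apply (Rmult_le_reg_r t); [lra|]. unfold Rdiv. rewrite Rmult_assoc, Rinv_l by lra. lra. }
  unfold Lambda, limsup_infty.
  match goal with |- Rbar_le _ (Rbar_glb ?E) =>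
    destruct (proj2_sig (Rbar_ex_glb E)) as [_ glb]; apply glb end.
  intros w [T ->].
  match goal with |- Rbar_le _ (Rbar_lub ?E) =>
    destruct (proj2_sig (Rbar_ex_lub E)) as [ub _] end.
  apply Rbar_le_trans with (growth_rate Om g Re k c0 r0 X0 (Rmax T 1)).
  - apply Hrate, Rmax_r.
  - apply ub. exists (Rmax T 1). split; [apply Rmax_l|reflexivity].
Qed.

Lemma amplitude_growth_pos Om ck a : 0 < Om -> 0 < ck -> 0 < a < 1 ->
  4 * Om + ck < a * (4 * Om + 3 * ck) ->
  0 < strain_rate ck a - frame_rotation Om ck a /\
  0 < strain_rate ck a + frame_rotation Om ck a.
Proof.
  intros hOm hck ha hsteep. unfold frame_rotation.
  set (kap := strain_rate ck a).
  assert (hkap : 0 < kap) by (apply Rdiv_lt_0_compat; nra).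
  assert (hkap1 : kap * (1 + a) = ck * a / (1 - a)) by (unfold kap, strain_rate; field; nra).
  assert (ck * a / (1 - a) > 2 * Om + ck / 2).
  { apply (Rmult_lt_reg_r (1 - a)); [lra|]. unfold Rdiv.
    rewrite Rmult_assoc, Rinv_l by lra. nra. }
  split; nra.
Qed.

Lemma exists_depth_with_steepness k r0 T : 0 < k -> 0 < T -> T < exp (k * r0) ->
  exists rs, rs < r0 /\ T < exp (k * rs).
Proof.
  intros hk hT hr0.
  assert (hln : ln T < k * r0) by (rewrite <- (ln_exp (k * r0)); apply ln_increasing; lra).
  exists ((r0 + ln T / k) / 2). split.
  - assert (ln T / k < r0) by (apply (Rmult_lt_reg_r k); [lra|]; field_simplify; lra). lra.
  - rewrite <- (exp_ln T) at 1 by auto. apply exp_increasing.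
    replace (k * ((r0 + ln T / k) / 2)) with ((k * r0 + ln T) / 2) by (field; lra). lra.
Qed.

Theorem proposition1 (Om g Re k c0 r0 : R)
  (hOm : 0 < Om) (hg : 0 < g) (hRe : 0 < Re) (hk : 0 < k)
  (hgamma : 0 < 2 * Om * c0 + g)
  (hc0 : c0 <> wave_speed Om g k c0)
  (hr0 : r0 < 0)
  (hsteep : exp (k * r0) >
            (3 * Om + sqrt (Om ^ 2 + k * (2 * Om * c0 + g)))
            / (Om + 3 * sqrt (Om ^ 2 + k * (2 * Om * c0 + g)))) :
  exists X0 : V3,
    in_fluid Om g Re k c0 r0 0 X0 /\
    Rbar_lt (Finite 0) (Lambda Om g Re k c0 r0 X0).
Proof.
  set (S := sqrt (Om ^ 2 + k * (2 * Om * c0 + g))) in *.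
  assert (hS : Om < S).
  { unfold S. rewrite <- (sqrt_pow2 Om) at 1 by lra. apply sqrt_lt_1_alt.
    split; [apply pow2_ge_0|].
    assert (0 < k * (2 * Om * c0 + g)) by (apply Rmult_lt_0_compat; lra). lra. }
  set (ck := wave_speed Om g k c0 * k).
  assert (hck : ck = S - Om) by (unfold ck, wave_speed; fold S; field; lra).
  destruct (exists_depth_with_steepness k r0 ((3 * Om + S) / (Om + 3 * S)) hk
              ltac:(apply Rdiv_lt_0_compat; lra) hsteep) as (rs & hrs & hsteep_rs).
  set (a := exp (k * rs)) in *.
  assert (ha : 0 < a < 1) by (split; [apply exp_pos|apply exp_lt_1; nra]).
  assert (hsteep_a : 4 * Om + ck < a * (4 * Om + 3 * ck)).
  { apply (Rmult_lt_compat_r (Om + 3 * S)) in hsteep_rs; [|lra].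
    unfold Rdiv in hsteep_rs. rewrite Rmult_assoc, Rinv_l in hsteep_rs by lra.
    rewrite hck. replace (4 * Om + 3 * (S - Om)) with (Om + 3 * S) by ring. lra. }
  destruct (amplitude_growth_pos Om ck a hOm ltac:(lra) ha hsteep_a) as [hminus hplus].
  set (mu := sqrt ((strain_rate ck a - frame_rotation Om ck a) *
                   (strain_rate ck a + frame_rotation Om ck a))).
  assert (hmu : mu * mu = (strain_rate ck a - frame_rotation Om ck a) *
                         (strain_rate ck a + frame_rotation Om ck a))
    by (apply sqrt_sqrt, Rmult_le_pos; lra).
  destruct (equatorial_wkb_solution Om g Re k c0 r0 rs mu hk hr0 hrs hminus hmu)
    as (b0 & b & hdot & hsol & hgrowth).
  exists (lagr Om g Re k c0 (mk3 0 rs 0) 0). split.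
  - exists (mk3 0 rs 0). split; [|reflexivity].
    unfold label_ok, v2, v3, mk3; simpl. rewrite fshape_0. lra.
  - apply Rbar_lt_le_trans with (Finite mu).
    + apply sqrt_lt_R0, Rmult_lt_0_compat; assumption.
    + exact (Lambda_ge_of_growing_solution _ _ _ _ _ _ _ _ _ _ _ _ _ norm3_e2 hdot hsol hgrowth).
Qed.
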